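(* For integers $p,q\ge 3$ with $p\mid q$, let $u_{q,p}:\mathbf{mGT}_q\to\mathbf{mGT}_p$ be the homomorphism sending $g\in\mathbf{mGT}_q$ to the unique permutation $u_{q,p}(g)$ of $\mathbb{Z}/p\mathbb{Z}$ satisfying $t_{q,p}\circ g=u_{q,p}(g)\circ t_{q,p}$, where $t_{q,p}:\mathbb{Z}/q\mathbb{Z}\to\mathbb{Z}/p\mathbb{Z}$ is reduction mod $p$. Then the groups $\mathbf{mGT}_q$ ($q\ge3$) together with the homomorphisms $u_{q,p}$ (for $p\mid q$) form a projective system indexed by the integers $\ge 3$ ordered by divisibility, and hence there exists a well-defined group $\mathbf{mGT}=\varprojlim_q \mathbf{mGT}_q$, the projective limit of the groups $\mathbf{mGT}_q$ with respect to the homomorphisms $u_{q,p}$.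
   Context: For an integer $q\ge 3$, $\mathbf{mGT}_q$ is the subgroup of the group of permutations of $\mathbb{Z}/q\mathbb{Z}$ generated by the multiplications $a\mapsto da$ for $d\in(\mathbb{Z}/q\mathbb{Z})^*$ (residues coprime to $q$) and the involution $\theta_q:a\mapsto 1-a$. The group $\mathbf{mGT}$ is called by the paper the modified profinite Grothendieck–Teichmüller group. *)

From HB Require Import structures.
From mathcomp Require Import all_boot all_order all_algebra all_fingroup.
Set Implicit Arguments. Unset Strict Implicit. Unset Printing Implicit Defensive.
Import GRing.Theory.

Local Open Scope group_scope.

(* Generators of mGT_q as permutations of Z/qZ:
   a |-> d * a for d a unit of Z/qZ, and theta_q : a |-> 1 - a.
   ('Z_q is Z/qZ for q >= 2; we only use q >= 3.) *)
Definition mGT_gens (q : nat) : {set {perm 'Z_q}} :=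
  [set s : {perm 'Z_q} |
     [exists d : {unit 'Z_q}, [forall a : 'Z_q, s a == (val d * a)%R]]
     || [forall a : 'Z_q, s a == (1 - a)%R]].

Definition mGT (q : nat) : {group {perm 'Z_q}} := <<mGT_gens q>>%G.

Definition red (q p : nat) (a : 'Z_q) : 'Z_p := inZp (val a).

(* Reduction mod p is a surjective ring morphism Z/qZ -> Z/pZ when p | q, so
   every generator of mGT_q maps fibres of the reduction into fibres: d * _
   induces red(d) * _ (red(d) is still a unit) and theta_q induces theta_p.
   Permutations with this fibre property form a group on which "the induced
   permutation" is a homomorphism; it maps the generators of mGT_q to those of
   mGT_p, hence mGT_q into mGT_p.  Functoriality u_{q,q} = id and
   u_{q,p} o u_{r,q} = u_{r,p} follow from the uniqueness of the induced
   permutation, and componentwise operations on compatible families are then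
   well defined because each u_{q,p} is a homomorphism. *)
From HB Require Import structures.
From mathcomp Require Import all_boot all_order all_algebra all_fingroup.
Set Implicit Arguments. Unset Strict Implicit. Unset Printing Implicit Defensive.
Import GRing.Theory.

Local Open Scope ring_scope.

Lemma redE q p (a : 'Z_q) : red p a = (a : nat)%:R.
Proof. by rewrite Zp_nat. Qed.

Section Reduction.
Variables q p : nat.
Hypotheses (p_gt1 : (1 < p)%N) (q_gt1 : (1 < q)%N) (p_dvd_q : (p %| q)%N).

Lemma red_nat n : red p (n%:R : 'Z_q) = n%:R.
Proof.
rewrite redE val_Zp_nat //.
by rewrite -(Zp_nat_mod p_gt1 (n %% q)) (modn_dvdm _ p_dvd_q) Zp_nat_mod.
Qed.

Lemma redD (x y : 'Z_q) : red p (x + y) = red p x + red p y.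
Proof. by rewrite -[x]natr_Zp -[y]natr_Zp -natrD !red_nat natrD. Qed.

Lemma redM (x y : 'Z_q) : red p (x * y) = red p x * red p y.
Proof. by rewrite -[x]natr_Zp -[y]natr_Zp -natrM !red_nat natrM. Qed.

Lemma red1 : red p (1 : 'Z_q) = 1.
Proof. exact: (red_nat 1). Qed.

Lemma redN (x : 'Z_q) : red p (- x) = - red p x.
Proof. by apply/eqP; rewrite -subr_eq0 opprK -redD addNr -(natr_Zp 0) red_nat. Qed.

Lemma red_unit (d : 'Z_q) : d \is a GRing.unit -> red p d \is a GRing.unit.
Proof.
rewrite -[d]natr_Zp red_nat !unitZpE //; exact: coprime_dvdl.
Qed.

Lemma red_inZp (b : 'Z_p) : red p (inZp (val b) : 'Z_q) = b.
Proof.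
apply: val_inj; case: b => n /=; rewrite !Zp_cast // => n_lt_p.
by rewrite !modn_small //; apply: leq_trans (dvdn_leq (ltnW q_gt1) p_dvd_q).
Qed.

End Reduction.

Lemma redK q (a : 'Z_q) : (1 < q)%N -> red q a = a.
Proof. by move=> q_gt1; rewrite /red valZpK. Qed.

Lemma red_red r q p (a : 'Z_r) : (1 < p)%N -> (1 < q)%N -> (p %| q)%N ->
  red p (red q a) = red p a.
Proof. by move=> p_gt1 q_gt1 p_dvd_q; rewrite [red q a]redE red_nat // -redE. Qed.

Local Close Scope ring_scope.
Local Open Scope group_scope.

Section InducedPermutation.
Variables q p : nat.

Definition red_compat : {set {perm 'Z_q}} :=
  [set g : {perm 'Z_q} |
    [forall a, forall b, (red p a == red p b) ==> (red p (g a) == red p (g b))]].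

Lemma red_compatP (g : {perm 'Z_q}) :
  reflect (forall a b, red p a = red p b -> red p (g a) = red p (g b)) (g \in red_compat).
Proof.
rewrite inE; apply: (iffP forallP) => [compat_g a b eq_ab | compat_g a].
  by apply/eqP; have /forallP/(_ b)/implyP := compat_g a; apply; rewrite eq_ab.
by apply/forallP=> b; apply/implyP=> /eqP/compat_g->.
Qed.

Lemma red_compat_group_set : group_set red_compat.
Proof.
apply/group_setP; split; first by apply/red_compatP => a b; rewrite !perm1.
move=> g h /red_compatP compat_g /red_compatP compat_h.
by apply/red_compatP => a b /compat_g /compat_h; rewrite !permM.
Qed.

Canonical red_compat_group := Group red_compat_group_set.

Definition induced_fun (g : {perm 'Z_q}) (b : 'Z_p) : 'Z_p := red p (g (inZp (val b))).

(* Outside [red_compat] the induced map need not be injective; there the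
   induced permutation is set to the identity. *)
Definition induced_perm_fun (g : {perm 'Z_q}) (b : 'Z_p) : 'Z_p :=
  if injectiveb (induced_fun g) then induced_fun g b else b.

Lemma induced_perm_fun_inj g : injective (induced_perm_fun g).
Proof. by rewrite /induced_perm_fun; case: injectiveP => // _; apply: inj_id. Qed.

Definition induced_perm g : {perm 'Z_p} := perm (@induced_perm_fun_inj g).

Hypotheses (p_gt1 : (1 < p)%N) (q_gt1 : (1 < q)%N) (p_dvd_q : (p %| q)%N).

Lemma induced_fun_red g a : g \in red_compat -> induced_fun g (red p a) = red p (g a).
Proof. by move=> /red_compatP compat_g; apply: compat_g; rewrite red_inZp. Qed.

Lemma induced_fun_inj g : g \in red_compat -> injective (induced_fun g).
Proof.
move=> compat_g; apply: (can_inj (g := induced_fun g^-1)) => b.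
have compat_gV : g^-1 \in red_compat by rewrite groupV.
by rewrite [induced_fun g b]/induced_fun induced_fun_red // permK red_inZp.
Qed.

Lemma red_perm g a : g \in red_compat -> red p (g a) = induced_perm g (red p a).
Proof.
move=> compat_g; rewrite permE /induced_perm_fun.
by case: injectiveP => [_|/(_ (induced_fun_inj compat_g))//]; rewrite induced_fun_red.
Qed.

Lemma induced_perm_unique g (h : {perm 'Z_p}) : g \in red_compat ->
  (forall a, red p (g a) = h (red p a)) -> h = induced_perm g.
Proof.
move=> compat_g red_h; apply/permP => b.
by rewrite -(red_inZp p_gt1 q_gt1 p_dvd_q b) -red_h red_perm.
Qed.

Lemma induced_permM : {in red_compat &, {morph induced_perm : g h / g * h}}.
Proof.
move=> g h compat_g compat_h /=; symmetry; apply: induced_perm_unique; first exact: groupM.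
by move=> a; rewrite !permM -!red_perm.
Qed.

Canonical induced_perm_morphism := Morphism induced_permM.

Lemma mGT_gens_red_compat : mGT_gens q \subset red_compat.
Proof.
apply/subsetP => g; rewrite inE => /orP[/existsP[d /forallP gE] | /forallP gE];
  apply/red_compatP => a b eq_ab; rewrite (eqP (gE a)) (eqP (gE b)).
  by rewrite !redM // eq_ab.
by rewrite !(redD, redN, red1) // eq_ab.
Qed.

Lemma mGT_red_compat : mGT q \subset red_compat.
Proof. by rewrite gen_subG mGT_gens_red_compat. Qed.

Lemma induced_perm_gens g : g \in mGT_gens q -> induced_perm g \in mGT_gens p.
Proof.
move=> gen_g; have compat_g := subsetP mGT_gens_red_compat g gen_g.
have red_gE b : induced_perm g b = red p (g (inZp (val b))).
  by rewrite red_perm // red_inZp.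
move: gen_g; rewrite !inE => /orP[/existsP[d /forallP gE] | /forallP gE].
  apply/orP; left; apply/existsP; exists (FinRing.Unit (red_unit p_gt1 q_gt1 p_dvd_q (valP d))).
  by apply/forallP => b /=; rewrite red_gE (eqP (gE _)) redM // red_inZp.
apply/orP; right; apply/forallP => b.
by rewrite red_gE (eqP (gE _)) !(redD, redN, red1) // red_inZp.
Qed.

Lemma induced_perm1 : induced_perm 1 = 1.
Proof. exact: morph1. Qed.

Lemma induced_permV : {in red_compat, {morph induced_perm : g / g^-1}}.
Proof. exact: morphV. Qed.

Lemma induced_perm_mGT g : g \in mGT q -> induced_perm g \in mGT p.
Proof.
move=> mGT_g; have compat_g := subsetP mGT_red_compat g mGT_g.
have: induced_perm @* mGT q \subset mGT p.
  rewrite morphim_gen ?mGT_gens_red_compat // genS //.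
  by apply/subsetP => _ /morphimP[h _ gen_h ->]; apply: induced_perm_gens.
by move/subsetP; apply; apply: mem_morphim.
Qed.

End InducedPermutation.

Lemma induced_perm_id q (g : {perm 'Z_q}) : (1 < q)%N -> induced_perm q g = g.
Proof.
move=> q_gt1; have compat_g : g \in red_compat q q.
  by apply/red_compatP => a b; rewrite !redK // => ->.
by symmetry; apply: induced_perm_unique => // a; rewrite !redK.
Qed.

Lemma induced_perm_comp r q p (g : {perm 'Z_r}) :
  (1 < p)%N -> (1 < q)%N -> (1 < r)%N -> (p %| q)%N -> (q %| r)%N -> g \in mGT r ->
  induced_perm p (induced_perm q g) = induced_perm p g.
Proof.
move=> p_gt1 q_gt1 r_gt1 p_dvd_q q_dvd_r mGT_g.
have p_dvd_r := dvdn_trans p_dvd_q q_dvd_r.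
have compat_qr := subsetP (mGT_red_compat q_gt1 r_gt1 q_dvd_r) g mGT_g.
have compat_pq := subsetP (mGT_red_compat p_gt1 q_gt1 p_dvd_q) _
  (induced_perm_mGT q_gt1 r_gt1 q_dvd_r mGT_g).
apply: induced_perm_unique (subsetP (mGT_red_compat p_gt1 r_gt1 p_dvd_r) g mGT_g) _ => // a.
rewrite -(red_red (g a) p_gt1 q_gt1 p_dvd_q) (red_perm q_gt1 r_gt1 q_dvd_r) //.
by rewrite (red_perm p_gt1 q_gt1 p_dvd_q) // red_red.
Qed.

Definition mGT_thread (x : forall q, {perm 'Z_q}) : Prop :=
  (forall q, (3 <= q)%N -> x q \in mGT q) /\
  (forall q p, (3 <= p)%N -> (3 <= q)%N -> (p %| q)%N -> induced_perm p (x q) = x p).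

Lemma mGT_thread1 : mGT_thread (fun q => 1).
Proof.
split=> [q _ | q p p_ge3 q_ge3 p_dvd_q]; first exact: group1.
exact: induced_perm1 (ltnW p_ge3) (ltnW q_ge3) p_dvd_q.
Qed.

Lemma mGT_threadM x y : mGT_thread x -> mGT_thread y -> mGT_thread (fun q => x q * y q).
Proof.
move=> [mGT_x thread_x] [mGT_y thread_y]; split=> [q q_ge3 | q p p_ge3 q_ge3 p_dvd_q].
  by rewrite groupM ?mGT_x ?mGT_y.
have [p_gt1 q_gt1] := (ltnW p_ge3, ltnW q_ge3).
have sub := subsetP (mGT_red_compat p_gt1 q_gt1 p_dvd_q).
by rewrite (induced_permM p_gt1 q_gt1 p_dvd_q) ?sub ?mGT_x ?mGT_y // thread_x ?thread_y.
Qed.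

Lemma mGT_threadV x : mGT_thread x -> mGT_thread (fun q => (x q)^-1).
Proof.
move=> [mGT_x thread_x]; split=> [q q_ge3 | q p p_ge3 q_ge3 p_dvd_q].
  by rewrite groupV mGT_x.
have [p_gt1 q_gt1] := (ltnW p_ge3, ltnW q_ge3).
have sub := subsetP (mGT_red_compat p_gt1 q_gt1 p_dvd_q).
by rewrite (induced_permV p_gt1 q_gt1 p_dvd_q) ?sub ?mGT_x // thread_x.
Qed.

Theorem corollary6p4 :
  exists u : forall q p : nat, {perm 'Z_q} -> {perm 'Z_p},
    (* u_{q,p} is well defined: u_{q,p}(g) is the unique permutation with
       t_{q,p} o g = u_{q,p}(g) o t_{q,p}, and it lies in mGT_p *)
    (forall q p : nat, 3 <= p -> 3 <= q -> p %| q ->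
       forall g, g \in mGT q ->
         [/\ u q p g \in mGT p,
             (forall a : 'Z_q, red p (g a) = u q p g (red p a)) &
             (forall h : {perm 'Z_p},
                (forall a : 'Z_q, red p (g a) = h (red p a)) -> h = u q p g)])
    (* u_{q,p} is a group homomorphism mGT_q -> mGT_p *)
    /\ (forall q p : nat, 3 <= p -> 3 <= q -> p %| q ->
         {in mGT q &, {morph u q p : x y / (x * y)%g}})
    (* projective system: u_{q,q} = id and u_{q,p} o u_{r,q} = u_{r,p} *)
    /\ (forall q : nat, 3 <= q -> {in mGT q, forall g, u q q g = g})
    /\ (forall r q p : nat, 3 <= p -> 3 <= q -> 3 <= r -> p %| q -> q %| r ->
         {in mGT r, forall g, u q p (u r q g) = u r p g})
    (* the projective limit (compatible families) is a group under
       componentwise operations *)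
    /\ (let lim := fun x : forall q : nat, {perm 'Z_q} =>
            (forall q, 3 <= q -> x q \in mGT q) /\
            (forall q p, 3 <= p -> 3 <= q -> p %| q -> u q p (x q) = x p) in
        [/\ lim (fun q => 1%g),
            (forall x y, lim x -> lim y -> lim (fun q => (x q * y q)%g)) &
            (forall x, lim x -> lim (fun q => (x q)^-1%g))]).
Proof.
exists (fun q p => @induced_perm q p); split; [|split; [|split; [|split]]].
- move=> q p p_ge3 q_ge3 p_dvd_q g mGT_g.
  have [p_gt1 q_gt1] := (ltnW p_ge3, ltnW q_ge3).
  have compat_g := subsetP (mGT_red_compat p_gt1 q_gt1 p_dvd_q) g mGT_g.
  split; first exact: induced_perm_mGT.
    by move=> a; apply: red_perm.
  by move=> h; apply: induced_perm_unique.
- move=> q p p_ge3 q_ge3 p_dvd_q.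
  have [p_gt1 q_gt1] := (ltnW p_ge3, ltnW q_ge3).
  by apply: sub_in2 (induced_permM p_gt1 q_gt1 p_dvd_q); apply/subsetP/mGT_red_compat.
- by move=> q q_ge3 g _; apply: induced_perm_id (ltnW q_ge3).
- move=> r q p p_ge3 q_ge3 r_ge3 p_dvd_q q_dvd_r g.
  exact: induced_perm_comp (ltnW p_ge3) (ltnW q_ge3) (ltnW r_ge3) p_dvd_q q_dvd_r.
- by split; [exact: mGT_thread1 | exact: mGT_threadM | exact: mGT_threadV].
Qed.
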